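(* Let $t$ be a positive integer, $n\ge 4t^2+10t$, and let $c\ge 3$ be an integer with $n\ge (t+1)c-1$. Then $$\lambda_1\big(D(K_{2t-1}\vee(K_{n-2t}+K_1))\big)<n+2\le \lambda_1\big(D(K_{tc-1}\vee(K_{n-(t+1)c+2}+(c-1)K_1))\big).$$
   Context: For a connected graph $G$, $D(G)$ is the distance matrix and $\lambda_1(D(G))$ its largest eigenvalue. $K_m$ is the complete graph, $+$ is disjoint union, $(c-1)K_1$ is $c-1$ isolated vertices, $\vee$ is the join (disjoint union plus all edges between the two parts). *)

From HB Require Import structures.
From mathcomp Require Import all_boot all_order all_algebra.
From mathcomp Require Import classical_sets reals.
Set Implicit Arguments. Unset Strict Implicit. Unset Printing Implicit Defensive.
Import Order.TTheory GRing.Theory Num.Theory.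

Definition complete_graph (m : nat) : rel 'I_m := fun x y => x != y.
Definition empty_graph (m : nat) : rel 'I_m := fun _ _ => false.

Definition gunion (T1 T2 : finType) (e1 : rel T1) (e2 : rel T2) : rel (T1 + T2)%type :=
  fun x y => match x, y with
             | inl a, inl b => e1 a b
             | inr a, inr b => e2 a b
             | _, _ => false
             end.

Definition gjoin (T1 T2 : finType) (e1 : rel T1) (e2 : rel T2) : rel (T1 + T2)%type :=
  fun x y => match x, y with
             | inl a, inl b => e1 a b
             | inr a, inr b => e2 a b
             | _, _ => true
             end.

Fixpoint reach (T : finType) (e : rel T) (k : nat) (x y : T) : bool :=
  match k with
  | 0 => x == y
  | k'.+1 => reach e k' x y || [exists z, reach e k' x z && e z y]
  end.

(* graph distance: least k with a walk of length k from x to y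
   (defaults to #|T| if y is unreachable; irrelevant for connected graphs) *)
Definition gdist (T : finType) (e : rel T) (x y : T) : nat :=
  find (fun k => reach e k x y) (iota 0 #|T|).

Definition distmx (R : realType) (T : finType) (e : rel T) : 'M[R]_#|T| :=
  (\matrix_(i, j) (gdist e (enum_val i) (enum_val j))%:R)%R.

(* largest eigenvalue of a real square matrix (for symmetric matrices all
   eigenvalues are real, and the spectrum is finite and nonempty) *)
Definition lambda1 (R : realType) (m : nat) (A : 'M[R]_m) : R :=
  sup [set a : R | eigenvalue A a].

Arguments complete_graph : clear implicits.
Arguments empty_graph : clear implicits.

(* The distance matrices of both graphs are constant on the blocks cut out by the
   three vertex classes (the dominating clique, the other complete part, the
   remaining vertices), and all their off-diagonal entries are 1 or 2.

   For the first graph a Collatz-Wielandt bound suffices: with weight n+2 on both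
   complete parts and 2n-2t on the pendant vertex, each weighted column sum of the
   distance matrix is at most (n+2 - 1/(n+2)) times the weight of its column, so
   every eigenvalue lies strictly below n+2.

   For the second graph, a vector constant on the three classes is an eigenvector
   for every nonnegative root r of the cubic [join_pivot].  This cubic is
   nonpositive at n+2 (this is where n >= 4t^2+10t and c >= 3 are used) and
   positive far to the right, so it has a root r >= n+2. *)

From HB Require Import structures.
From mathcomp Require Import all_boot all_order all_algebra.
From mathcomp Require Import classical_sets reals.
From mathcomp Require Import ring lra zify.
Import Order.TTheory GRing.Theory Num.Theory.

Set Implicit Arguments.
Unset Strict Implicit.
Unset Printing Implicit Defensive.

Section GraphDistance.
Variables (T : finType) (e : rel T).

Lemma exists_eq_step x y : [exists z, (x == z) && e z y] = e x y.
Proof.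
apply/existsP/idP => [[z /andP[/eqP-> //]]|exy].
by exists x; rewrite eqxx.
Qed.

Lemma gdist_refl x : (0 < #|T|)%N -> gdist e x x = 0%N.
Proof. by rewrite /gdist; case: #|T| => //= k _; rewrite eqxx. Qed.

Lemma gdist_adj x y : (1 < #|T|)%N -> x != y -> e x y -> gdist e x y = 1%N.
Proof.
rewrite /gdist; case: #|T| => [|[|k]] //= _ /negbTE neq_xy exy.
by rewrite neq_xy exists_eq_step exy.
Qed.

Lemma gdist_common_nbr x y z : (2 < #|T|)%N -> x != y -> ~~ e x y ->
  e x z -> e z y -> gdist e x y = 2%N.
Proof.
rewrite /gdist; case: #|T| => [|[|[|k]]] //= _ /negbTE neq_xy /negbTE nexy exz ezy.
rewrite neq_xy exists_eq_step nexy /=.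
suff -> : [exists z0, ((x == z0) || [exists z1, (x == z1) && e z1 z0]) && e z0 y] by [].
by apply/existsP; exists z; rewrite exists_eq_step exz orbT.
Qed.

End GraphDistance.

Definition join_dist (k l : nat) (S : finType) (x y : 'I_k + ('I_l + S)) : nat :=
  if x == y then 0%N else
  match x, y with
  | inl _, _ | _, inl _ | inr (inl _), inr (inl _) => 1%N
  | _, _ => 2%N
  end.

Lemma gdist_join_clique (k l : nat) (S : finType) (f : rel S) x y :
  (forall a b, f a b = false) -> (0 < k)%N -> (2 < #|{: 'I_k + ('I_l + S)}|)%N ->
  gdist (gjoin (complete_graph k) (gunion (complete_graph l) f)) x y = join_dist x y.
Proof.
move=> f_edgeless k_gt0 card_gt2; rewrite /join_dist.
have [->|neq_xy] := eqVneq x y; first by apply: gdist_refl; apply: ltnW (ltnW _).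
case: x neq_xy => [a|[a|a]]; case: y => [b|[b|b]] neq_xy;
  try by apply: gdist_adj (ltnW _) _ _ => //=; apply: contraNneq neq_xy => ->.
all: by apply: (@gdist_common_nbr _ _ _ _ (inl (Ordinal k_gt0))) => //=; rewrite f_edgeless.
Qed.

Local Open Scope ring_scope.

Definition blockwise (R : Type) (A B C : Type) (x1 x2 x3 : R) (y : A + (B + C)) : R :=
  match y with inl _ => x1 | inr (inl _) => x2 | inr (inr _) => x3 end.

Lemma sum_ord_except (R : pzRingType) m (a : 'I_m) (v : R) :
  \sum_(i < m) (if i == a then 0 else v) = m%:R * v - v.
Proof.
rewrite (bigD1 a) //= eqxx add0r (eq_bigr (fun=> v)) => [|i /negbTE -> //].
rewrite sumr_const cardC1 card_ord; case: m a => [[]//|m a].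
by rewrite mulr_natl mulrSr addrK.
Qed.

Lemma sum_join_dist (R : comPzRingType) k l m (x1 x2 x3 : R) (x : 'I_k + ('I_l + 'I_m)) :
  \sum_y blockwise x1 x2 x3 y * (join_dist y x)%:R =
  match x with
  | inl _ => k%:R * x1 - x1 + l%:R * x2 + m%:R * x3
  | inr (inl _) => k%:R * x1 + l%:R * x2 - x2 + 2 * m%:R * x3
  | inr (inr _) => k%:R * x1 + 2 * l%:R * x2 + 2 * m%:R * x3 - 2 * x3
  end.
Proof.
have sum_except (n : nat) (a : 'I_n) (c : R) (d : nat) (P : 'I_n -> bool) :
    P =1 pred1 a -> \sum_i c * (if P i then 0%N else d)%:R = n%:R * (c * d%:R) - c * d%:R.
  move=> Pa; rewrite -(sum_ord_except a); apply: eq_bigr => i _.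
  by rewrite Pa /=; case: eqP; rewrite ?mulr0.
rewrite !big_sumType /join_dist.
case: x => [a|[a|a]] /=; rewrite ?(@sum_except _ a) // !sumr_const !card_ord; ring.
Qed.

Lemma normr_distmx (R : realType) (T : finType) (e : rel T) i j :
  `|distmx R e i j| = distmx R e i j.
Proof. by rewrite mxE normr_nat. Qed.

Lemma distmx_weighted_colsum (R : realType) (T : finType) (e : rel T) (w : T -> R) j :
  \sum_i w (enum_val i) * distmx R e i j = \sum_x w x * (gdist e x (enum_val j))%:R.
Proof.
under eq_bigr do rewrite mxE.
by rewrite -(big_enum_val (fun x => w x * (gdist e x (enum_val j))%:R)).
Qed.

Lemma eigenvalue_le_weighted_colsum (R : realFieldType) m (A : 'M[R]_m)
    (w : 'I_m -> R) (b a : R) :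
  (forall i, 0 < w i) -> (forall j, \sum_i w i * `|A i j| <= b * w j) ->
  eigenvalue A a -> `|a| <= b.
Proof.
move=> w_gt0 colsum_le /eigenvalueP[v vA v_neq0].
have [j0 vj0_neq0] : exists j, v 0 j != 0.
  apply/existsP; apply: contraNT v_neq0; rewrite negb_exists => /forallP v0.
  by apply/eqP/rowP => j; rewrite !mxE; apply/eqP; rewrite -[_ == _]negbK v0.
pose g j := `|v 0 j| / w j.
have [j _ g_max] := @arg_maxP _ R _ j0 predT g isT.
have gj_gt0 : 0 < g j.
  by apply: lt_le_trans (g_max j0 isT); rewrite divr_gt0 ?normr_gt0.
have vAj : a * v 0 j = \sum_i v 0 i * A i j.
  by have := congr1 (fun M : 'M_(1, m) => M 0 j) vA; rewrite !mxE => <-.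
have : `|a| * `|v 0 j| <= g j * (b * w j).
  rewrite -normrM vAj; apply: le_trans (ler_norm_sum _ _ _) _.
  apply: le_trans (ler_wpM2l (ltW gj_gt0) (colsum_le j)); rewrite mulr_sumr.
  apply: ler_sum => i _; rewrite normrM mulrA ler_wpM2r //.
  by have := g_max i isT; rewrite /= {1}/g ler_pdivrMr.
have -> : `|v 0 j| = g j * w j by rewrite /g mulrVK // unitfE gt_eqF.
by rewrite mulrCA ler_pM2l // ler_pM2r.
Qed.

Lemma eigenvalue_le_sum_norm (R : realFieldType) m (A : 'M[R]_m) a :
  eigenvalue A a -> a <= \sum_i \sum_j `|A i j|.
Proof.
move=> eig_a; apply: le_trans (ler_norm a) _.
apply: (eigenvalue_le_weighted_colsum (w := fun=> 1)) eig_a => // j.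
rewrite mulr1; apply: ler_sum => i _.
by rewrite mul1r (bigD1 j) //= lerDl sumr_ge0.
Qed.

Section Lambda1.
Local Open Scope classical_set_scope.
Variable R : realType.

Lemma lambda1_le_bound m (A : 'M[R]_m) b :
  0 <= b -> (forall a, eigenvalue A a -> a <= b) -> lambda1 A <= b.
Proof.
move=> b_ge0 eig_le; rewrite /lambda1.
have [[a eig_a]|no_eig] := boolp.pselect ([set a : R | eigenvalue A a] !=set0).
  by apply: ge_sup => [|x /eig_le]; first by exists a.
rewrite (_ : [set a : R | eigenvalue A a] = set0) ?sup0 //.
by apply/seteqP; split => // a eig_a; apply: no_eig; exists a.
Qed.

Lemma eigenvalue_le_lambda1 m (A : 'M[R]_m) a : eigenvalue A a -> a <= lambda1 A.
Proof.
move=> eig_a; apply: ub_le_sup => //.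
by exists (\sum_i \sum_j `|A i j|) => x /eigenvalue_le_sum_norm.
Qed.

End Lambda1.

Lemma lambda1_join_clique_pendant_lt (R : realType) (k l : nat) :
  (0 < k)%N -> (1 < k + l)%N ->
  lambda1 (distmx R (gjoin (complete_graph k)
                           (gunion (complete_graph l) (complete_graph 1))))
    < (k + l + 3)%:R.
Proof.
move=> k_gt0 kl_gt1.
have card_gt2 : (2 < #|{: 'I_k + ('I_l + 'I_1)}|)%N by rewrite !card_sum !card_ord; lia.
have K1_edgeless (a b : 'I_1) : complete_graph 1 a b = false.
  by rewrite /complete_graph (ord1 a) (ord1 b) eqxx.
set K : R := k%:R; set L : R := l%:R; set M : R := (k + l + 3)%:R.
have M_def : M = K + L + 3 by rewrite /M !natrD.
have K_ge1 : 1 <= K by rewrite ler1n.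
have L_ge0 : 0 <= L by rewrite ler0n.
have M_gt0 : 0 < M by lra.
pose W := blockwise M M (K + 2 * L + 1) : 'I_k + ('I_l + 'I_1) -> R.
have M_inv_le1 : M^-1 <= 1 by rewrite invf_le1 //; lra.
have b_ge0 : 0 <= M - M^-1 by lra.
apply: le_lt_trans (lambda1_le_bound b_ge0 _) _; last by rewrite ltrBlDr ltrDl invr_gt0.
move=> a eig_a; apply: le_trans (ler_norm a) _.
apply: (eigenvalue_le_weighted_colsum (w := fun i => W (enum_val i))) eig_a.
  by move=> i; rewrite /W; case: (enum_val i) => [?|[?|?]] /=; lra.
move=> j.
under eq_bigr do rewrite normr_distmx.
rewrite distmx_weighted_colsum.
under eq_bigr do rewrite gdist_join_clique //.
rewrite sum_join_dist mulrBl.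
case: (enum_val j) => [?|[?|?]] /=; rewrite -/K -/L ?mulVf ?gt_eqF //.
- nra.
- nra.
have : (K + 2 * L + 1) / M <= M by rewrite ler_pdivrMr //; nra.
nra.
Qed.

(* The characteristic polynomial of the quotient of the distance matrix of
   K_K \/ (K_L + S K_1) over its three vertex classes. *)
Section JoinPivot.
Variables (R : realType) (K L S : R).

Definition join_pivot : {poly R} :=
  ('X - (K + L - 1)%:P) * ('X + 1%:P) * ('X + 2%:P)
  - S%:P * ('X + (L + 1)%:P) * (2%:P * 'X + (2 - K)%:P).

Lemma join_pivotE r : join_pivot.[r] =
  (r - (K + L - 1)) * (r + 1) * (r + 2) - S * (r + L + 1) * (2 * r + 2 - K).
Proof. by rewrite /join_pivot !(hornerD, hornerM, hornerN, hornerC, hornerX); ring. Qed.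

Lemma join_pivot_ge0 a : 0 <= K -> 0 <= L -> 0 <= S -> 0 <= a ->
  0 <= join_pivot.[a + K + L + 2 * S * (L + 1)].
Proof.
move=> K_ge0 L_ge0 S_ge0 a_ge0; rewrite join_pivotE.
set r := a + K + L + 2 * S * (L + 1).
have r_ge0 : 0 <= r by rewrite /r; nra.
have P_ge0 : 0 <= (r + 1) * (r + 2) by nra.
have drop_K : S * (r + L + 1) * (2 * r + 2 - K) <= 2 * S * ((r + 1) * (r + L + 1)).
  have : 0 <= S * (r + L + 1) * K by rewrite !mulr_ge0 //; lra.
  lra.
have widen : 2 * S * ((r + 1) * (r + L + 1)) <= 2 * S * (L + 1) * ((r + 1) * (r + 2)).
  have : (r + 1) * (r + L + 1) <= (L + 1) * ((r + 1) * (r + 2)) by nra.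
  nra.
have lead : 2 * S * (L + 1) * ((r + 1) * (r + 2)) <= (r - (K + L - 1)) * ((r + 1) * (r + 2)).
  by rewrite ler_wpM2r // /r; lra.
lra.
Qed.

Lemma join_pivot_root a : 0 <= K -> 0 <= L -> 0 <= S -> 0 <= a ->
  join_pivot.[a] <= 0 -> exists2 r, a <= r & root join_pivot r.
Proof.
move=> K_ge0 L_ge0 S_ge0 a_ge0 pa_le0.
have a_le : a <= a + K + L + 2 * S * (L + 1) by nra.
have [|r /andP[a_le_r _] root_r] := @poly_ivt R join_pivot _ _ a_le.
  by rewrite pa_le0 join_pivot_ge0.
by exists r.
Qed.

End JoinPivot.

Lemma eigenvalue_join_clique_union_edgeless (R : realType) (k l m : nat) (r : R) :
  (0 < k)%N -> (0 < m)%N -> (2 < k + l + m)%N -> 0 <= r ->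
  root (join_pivot k%:R l%:R m%:R) r ->
  eigenvalue (distmx R (gjoin (complete_graph k)
                              (gunion (complete_graph l) (empty_graph m)))) r.
Proof.
move=> k_gt0 m_gt0 klm_gt2 r_ge0 /rootP pivot_r.
have card_gt2 : (2 < #|{: 'I_k + ('I_l + 'I_m)}|)%N by rewrite !card_sum !card_ord addnA.
set L : R := l%:R; set S : R := m%:R.
pose x2 := (r + 1) * (r + 2); pose x3 := (r + 1) * (r + L + 1).
pose X := blockwise (x2 - S * (r + L + 1)) x2 x3 : 'I_k + ('I_l + 'I_m) -> R.
apply/eigenvalueP; exists (\row_i X (enum_val i)).
  apply/rowP => j; rewrite mxE [RHS]mxE [in RHS]mxE.
  under eq_bigr do rewrite mxE.
  rewrite distmx_weighted_colsum.
  under eq_bigr do rewrite gdist_join_clique //.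
  rewrite sum_join_dist; apply/eqP; rewrite -subr_eq0 -oppr_eq0 -pivot_r join_pivotE.
  by apply/eqP; rewrite /X /x2 /x3; case: (enum_val j) => [?|[?|?]] /=; ring.
have L_ge0 : 0 <= L by rewrite ler0n.
have x3_gt0 : 0 < x3 by rewrite /x3 mulr_gt0 //; lra.
apply/eqP => /rowP /(_ (enum_rank (inr (inr (Ordinal m_gt0))))).
by rewrite !mxE enum_rankK /X /= => x3_eq0; move: x3_gt0; rewrite x3_eq0 ltxx.
Qed.

Lemma lambda1_join_clique_union_edgeless_ge (R : realType) (k l m : nat) :
  (0 < k)%N -> (0 < m)%N -> (2 < k + l + m)%N ->
  (join_pivot (k%:R : R) l%:R m%:R).[(k + l + m + 2)%:R] <= 0 ->
  (k + l + m + 2)%:R <= lambda1 (distmx R (gjoin (complete_graph k)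
                                  (gunion (complete_graph l) (empty_graph m)))) :> R.
Proof.
move=> k_gt0 m_gt0 klm_gt2 pivot_le0.
have [r N_le_r root_r] := join_pivot_root (ler0n R k) (ler0n R l) (ler0n R m) (ler0n R _) pivot_le0.
have r_ge0 : 0 <= r := le_trans (ler0n R _) N_le_r.
apply: le_trans N_le_r (eigenvalue_le_lambda1 _).
exact: eigenvalue_join_clique_union_edgeless.
Qed.

Lemma join_pivot_le0 (R : realType) (t c l : nat) :
  (0 < t)%N -> (3 <= c)%N -> (4 * t ^ 2 + 10 * t + 2 <= (t + 1) * c + l)%N ->
  (join_pivot (t * c - 1)%:R l%:R (c - 1)%:R).[(t * c - 1 + l + (c - 1) + 2)%:R]
    <= 0 :> R.
Proof.
move=> t_gt0 c_ge3 order_ge.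
(* The claim at r = tc + l + c, with both sides written over nat for [nia]. *)
have : ((c + 2) * (t * c + l + c + 1) * (t * c + l + c + 2)
        <= (c - 1) * (t * c + 2 * l + c + 1) * (t * c + 2 * l + 2 * c + 3))%N by nia.
have tc_ge1 : (1 <= t * c)%N by nia.
rewrite -(ler_nat R) join_pivotE !(natrD, natrM, natrB) //; last by lia.
lra.
Qed.

Local Close Scope ring_scope.

Theorem mainTheorem6 (R : realType) (t n c : nat)
  (ht : (0 < t)%N) (hn : (4 * t ^ 2 + 10 * t <= n)%N)
  (hc : (3 <= c)%N) (hnc : ((t + 1) * c - 1 <= n)%N) :
  (lambda1 (distmx R
     (gjoin (complete_graph (2 * t - 1)%N)
            (gunion (complete_graph (n - 2 * t)%N) (complete_graph 1))))
     < (n + 2)%N%:R)%R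
  /\
  ((n + 2)%N%:R <=
     lambda1 (distmx R
     (gjoin (complete_graph (t * c - 1)%N)
            (gunion (complete_graph (n + 2 - (t + 1) * c)%N) (empty_graph (c - 1)%N)))))%R.
Proof.
split.
  have := @lambda1_join_clique_pendant_lt R (2 * t - 1) (n - 2 * t).
  by rewrite (_ : (2 * t - 1 + (n - 2 * t) + 3 = n + 2)%N); [apply; lia | lia].
have sizes : (t * c - 1 + (n + 2 - (t + 1) * c) + (c - 1) + 2 = n + 2)%N by nia.
rewrite -{1}sizes; apply: lambda1_join_clique_union_edgeless_ge; [nia | lia | nia |].
by apply: join_pivot_le0 => //; lia.
Qed.
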